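(* Let $J=\bigoplus_{(k,m)\in\mathbb{Z}_{\ge0}^2}J_{k,m}$ be a commutative bigraded ring. For $n\in\mathbb{Q}_{>0}$ put $J_n=\bigoplus_{(k,m):\,m=kn}J_{k,m}$ and $J_{\le n}=\bigoplus_{(k,m):\,m\le kn}J_{k,m}$. Fix $n\in\mathbb{Q}_{>0}$ and suppose that $J_{\le n}$ is finitely generated as an algebra over $J_{0,0}$. Then $J_n$ is finitely generated as an algebra over $J_{0,0}$.
   Context: The sums defining $J_n$ and $J_{\le n}$ range over pairs $(k,m)\in\mathbb{Z}_{\ge0}^2$; both are subrings of $J$ containing $J_{0,0}$. *)

From HB Require Import structures.
From mathcomp Require Import all_boot all_order all_algebra.
Set Implicit Arguments. Unset Strict Implicit. Unset Printing Implicit Defensive.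
Import Order.TTheory GRing.Theory Num.Theory.
Local Open Scope ring_scope.

(* A bigrading of a commutative ring J is given internally by a family of
   additive subgroups G k m (the pieces J_{k,m}, k m : nat) such that J is
   their (internal) direct sum and G k m * G k' m' ⊆ G (k+k') (m+m'). *)

Section Bigraded.
Variable J : comPzRingType.

Definition homog_sum (G : nat -> nat -> J -> Prop) (P : nat -> nat -> bool)
    (x : J) : Prop :=
  exists (s : seq (nat * nat)) (f : nat * nat -> J),
    [/\ uniq s, all (fun d => P d.1 d.2) s,
        (forall d, d \in s -> G d.1 d.2 (f d)) & x = \sum_(d <- s) f d].

Record bigrading (G : nat -> nat -> J -> Prop) : Prop := {
  bigr_zero : forall k m, G k m 0;
  bigr_sub  : forall k m x y, G k m x -> G k m y -> G k m (x - y);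
  bigr_one  : G 0%N 0%N 1;
  bigr_mul  : forall k m k' m' x y, G k m x -> G k' m' y ->
                G (k + k')%N (m + m')%N (x * y);
  bigr_span : forall x, homog_sum G (fun _ _ => true) x;
  bigr_indep : forall (s : seq (nat * nat)) (f : nat * nat -> J), uniq s ->
      (forall d, d \in s -> G d.1 d.2 (f d)) ->
      \sum_(d <- s) f d = 0 -> forall d, d \in s -> f d = 0
}.

Definition J_eq (G : nat -> nat -> J -> Prop) (n : rat) : J -> Prop :=
  homog_sum G (fun k m => (m%:R : rat) == k%:R * n).

Definition J_le (G : nat -> nat -> J -> Prop) (n : rat) : J -> Prop :=
  homog_sum G (fun k m => (m%:R : rat) <= k%:R * n).

Inductive gen_alg (A : J -> Prop) (gens : seq J) : J -> Prop :=
  | ga_base x : A x -> gen_alg A gens x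
  | ga_gen x : x \in gens -> gen_alg A gens x
  | ga_add x y : gen_alg A gens x -> gen_alg A gens y -> gen_alg A gens (x + y)
  | ga_opp x : gen_alg A gens x -> gen_alg A gens (- x)
  | ga_mul x y : gen_alg A gens x -> gen_alg A gens y -> gen_alg A gens (x * y).

Definition fin_gen_over (A B : J -> Prop) : Prop :=
  exists gens : seq J, (forall g, g \in gens -> B g) /\
    (forall x, B x <-> gen_alg A gens x).

End Bigraded.

From mathcomp Require Import all_boot all_order all_algebra.
Import Order.TTheory GRing.Theory Num.Theory.
Local Open Scope ring_scope.

(* Decompose the finitely many generators of J_{<= n} into their homogeneous
   components and give the bidegree (k, m) the weight w(k, m) = m - k n, which
   is additive and <= 0 on every component.  A polynomial in the components
   then splits as y + z, where y is a polynomial in the weight-0 components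
   and z is a sum of homogeneous elements of negative weight, because a
   product involving a negative-weight factor has negative weight.  If the
   polynomial lies in J_n, then so does z, hence z = 0 by directness of the
   bigrading: the weight-0 components generate J_n. *)

Set Implicit Arguments.
Unset Strict Implicit.
Unset Printing Implicit Defensive.

Lemma sumr_if_eq_uniq (T : eqType) (V : nmodType) (s : seq T) a (c : V) :
  uniq s -> a \in s -> \sum_(d <- s) (if a == d then c else 0) = c.
Proof.
move=> us a_s; rewrite (big_rem a) //= eqxx big1_seq ?addr0 // => d /= drem.
by case: eqP drem => // <-; rewrite mem_rem_uniqF.
Qed.

Section GeneratedAlgebra.
Variables (J : comPzRingType) (A : J -> Prop).

Lemma gen_alg_trans gens gens' x :
  (forall g, g \in gens -> gen_alg A gens' g) -> gen_alg A gens x -> gen_alg A gens' x.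
Proof.
move=> gens_gens'; elim=> {x} [x Ax | x xg | x y _ ? _ ? | x _ ? | x y _ ? _ ?].
- exact: ga_base.
- exact: gens_gens'.
- exact: ga_add.
- exact: ga_opp.
- exact: ga_mul.
Qed.

Lemma gen_alg_sum gens (I : eqType) (r : seq I) (F : I -> J) :
  A 0 -> (forall i, i \in r -> gen_alg A gens (F i)) ->
  gen_alg A gens (\sum_(i <- r) F i).
Proof.
move=> A0; elim: r => [|i r IHr] AF; first by rewrite big_nil; apply: ga_base.
rewrite big_cons; apply: ga_add; first by apply: AF; rewrite mem_head.
by apply: IHr => j jr; apply: AF; rewrite inE jr orbT.
Qed.

End GeneratedAlgebra.

Section HomogeneousSums.
Variables (J : comPzRingType) (G : nat -> nat -> J -> Prop).
Hypothesis HG : bigrading G.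

Lemma bigr_add k m x y : G k m x -> G k m y -> G k m (x + y).
Proof.
move=> Gx Gy; rewrite -[y]opprK -[- y]sub0r.
by apply: (bigr_sub HG) => //; apply: (bigr_sub HG) => //; apply: bigr_zero.
Qed.

Lemma bigr_opp k m x : G k m x -> G k m (- x).
Proof. by move=> Gx; rewrite -sub0r; apply: (bigr_sub HG) => //; apply: bigr_zero. Qed.

Lemma bigr_sum (k m : nat) (I : eqType) (r : seq I) (P : pred I) (F : I -> J) :
  (forall i, i \in r -> P i -> G k m (F i)) -> G k m (\sum_(i <- r | P i) F i).
Proof.
elim: r => [|i r IHr] GF; first by rewrite big_nil; apply: bigr_zero.
have GFr j : j \in r -> P j -> G k m (F j) by move=> jr; apply: GF; rewrite inE jr orbT.
rewrite big_cons; case: ifP => Pi; last exact: IHr.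
by apply: bigr_add (IHr GFr); apply: GF; rewrite ?mem_head.
Qed.

(* Unlike [homog_sum], [hsum] allows repeated bidegrees, which makes closure
   under sums and products immediate; [homog_sumE] shows the two agree. *)
Definition hsum (P : nat -> nat -> bool) (x : J) : Prop :=
  exists L : seq ((nat * nat) * J),
    (forall p, p \in L -> G p.1.1 p.1.2 p.2 /\ P p.1.1 p.1.2) /\
    x = \sum_(p <- L) p.2.

Lemma homog_sumE (P : nat -> nat -> bool) x : homog_sum G P x <-> hsum P x.
Proof.
split.
  move=> [s [f [_ /allP Ps Gs ->]]]; exists [seq (d, f d) | d <- s].
  by rewrite big_map; split=> // q /mapP[d ds ->]; split; [apply: Gs | apply: Ps].
move=> [L [HL ->]]; set s := undup [seq p.1 | p <- L].
have us : uniq s := undup_uniq _.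
exists s, (fun d => \sum_(p <- L | p.1 == d) p.2); split=> //.
- by apply/allP => d; rewrite mem_undup => /mapP[p /HL[_ Pp] ->].
- by move=> d _; apply: bigr_sum => p /HL[Gp _] /eqP <-.
under [RHS]eq_bigr do rewrite big_mkcond.
rewrite exchange_big /=; apply: eq_big_seq => p pL /=.
by rewrite sumr_if_eq_uniq // mem_undup map_f.
Qed.

Variables P Q : nat -> nat -> bool.

Lemma hsum0 : hsum P 0.
Proof. by exists [::]; rewrite big_nil. Qed.

Lemma hsum_homog k m x : G k m x -> P k m -> hsum P x.
Proof.
move=> Gx Pkm; exists [:: ((k, m), x)]; rewrite big_seq1.
by split=> // p; rewrite inE => /eqP ->.
Qed.

Lemma hsumD x y : hsum P x -> hsum P y -> hsum P (x + y).
Proof.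
move=> [L1 [HL1 ->]] [L2 [HL2 ->]]; exists (L1 ++ L2); rewrite big_cat.
by split=> // p; rewrite mem_cat => /orP[]; [apply: HL1 | apply: HL2].
Qed.

Lemma hsumN x : hsum P x -> hsum P (- x).
Proof.
move=> [L [HL ->]]; exists [seq (p.1, - p.2) | p <- L].
rewrite big_map sumrN; split=> // q /mapP[p pL ->] /=.
by have [Gp Pp] := HL p pL; split; first exact: bigr_opp.
Qed.

Lemma hsumB x y : hsum P x -> hsum P y -> hsum P (x - y).
Proof. by move=> Px /hsumN; apply: hsumD. Qed.

Lemma hsum_mono x : (forall k m, P k m -> Q k m) -> hsum P x -> hsum Q x.
Proof.
move=> PQ [L [HL ->]]; exists L; split=> // p /HL[Gp Pp].
by split; last exact: PQ.
Qed.

Lemma hsumM (R : nat -> nat -> bool) x y :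
  (forall k m k' m', P k m -> Q k' m' -> R (k + k')%N (m + m')%N) ->
  hsum P x -> hsum Q y -> hsum R (x * y).
Proof.
move=> PQR [L1 [HL1 ->]] [L2 [HL2 ->]].
exists [seq ((p.1.1 + q.1.1, p.1.2 + q.1.2)%N, p.2 * q.2) | p <- L1, q <- L2].
split; last first.
  by rewrite big_allpairs_dep mulr_suml; apply: eq_bigr => p _; rewrite mulr_sumr.
move=> r /allpairsP[[p q] /= [/HL1[Gp Pp] /HL2[Gq Qq] ->]] /=.
by split; [apply: (bigr_mul HG) | apply: PQR].
Qed.

Lemma hsum_disjoint_eq0 z :
  (forall k m, P k m -> Q k m -> False) -> hsum P z -> hsum Q z -> z = 0.
Proof.
move=> PQ /homog_sumE[s1 [f1 [u1 /allP P1 G1 E1]]].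
move=> /homog_sumE[s2 [f2 [u2 /allP P2 G2 E2]]].
have s1'2 d : d \in s1 -> d \notin s2.
  by move=> d1; apply/negP => d2; apply: (PQ d.1 d.2); [apply: P1 | apply: P2].
pose f d := if d \in s1 then f1 d else - f2 d.
have u12 : uniq (s1 ++ s2).
  rewrite cat_uniq u1 u2 andbT; apply/hasPn => d d2.
  by apply/negP => /s1'2; rewrite d2.
have Gf d : d \in s1 ++ s2 -> G d.1 d.2 (f d).
  rewrite /f mem_cat; case: ifP => [d1 _ | _ /= d2]; first exact: G1.
  exact/bigr_opp/G2.
have sum_f : \sum_(d <- s1 ++ s2) f d = 0.
  rewrite big_cat /=.
  have -> : \sum_(d <- s1) f d = \sum_(d <- s1) f1 d.
    by apply: eq_big_seq => d d1; rewrite /f d1.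
  have -> : \sum_(d <- s2) f d = \sum_(d <- s2) - f2 d.
    apply: eq_big_seq => d d2; rewrite /f; case: ifP => // d1.
    by have := s1'2 d d1; rewrite d2.
  by rewrite sumrN -E1 -E2 subrr.
rewrite E1 big1_seq // => d /= d1.
by have := bigr_indep HG u12 Gf sum_f (d := d); rewrite /f d1 mem_cat d1; apply.
Qed.

Lemma homogeneous_generators (gens : seq J) :
  (forall g, g \in gens -> hsum P g) ->
  exists H : seq ((nat * nat) * J),
    (forall p, p \in H -> G p.1.1 p.1.2 p.2 /\ P p.1.1 p.1.2) /\
    (forall g, g \in gens -> gen_alg (G 0%N 0%N) [seq p.2 | p <- H] g).
Proof.
elim: gens => [|g gens IH] Pgens; first by exists [::].
have [|H [HH Hgens]] := IH.
  by move=> h hgens; apply: Pgens; rewrite inE hgens orbT.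
have [L [HL ->]] := Pgens g (mem_head g gens).
exists (L ++ H); split=> [p | h].
  by rewrite mem_cat => /orP[]; [apply: HL | apply: HH].
rewrite map_cat inE => /orP[/eqP -> | hgens].
  apply: gen_alg_sum => [|p pL]; first exact: bigr_zero.
  by apply: ga_gen; rewrite mem_cat map_f.
apply: gen_alg_trans (Hgens h hgens) => q qH.
by apply: ga_gen; rewrite mem_cat qH orbT.
Qed.

End HomogeneousSums.

Section WeightZeroPart.
Variables (J : comPzRingType) (G : nat -> nat -> J -> Prop).
Hypothesis HG : bigrading G.
Variables (R : numDomainType) (w : nat -> nat -> R).
Hypothesis wD : forall k m k' m', w (k + k')%N (m + m')%N = w k m + w k' m'.

Lemma weight00 : w 0%N 0%N = 0.
Proof. by apply: (@addrI _ (w 0%N 0%N)); rewrite -wD addr0. Qed.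

Lemma weight_eq0D k m k' m' :
  w k m == 0 -> w k' m' == 0 -> w (k + k')%N (m + m')%N == 0.
Proof. by rewrite wD => /eqP-> /eqP->; rewrite addr0. Qed.

Lemma weight_lt0D k m k' m' :
  w k m < 0 -> w k' m' < 0 -> w (k + k')%N (m + m')%N < 0.
Proof. by rewrite wD -!oppr_gt0 opprD; apply: addr_gt0. Qed.

Lemma weight_lt0Dl k m k' m' :
  w k m == 0 -> w k' m' < 0 -> w (k + k')%N (m + m')%N < 0.
Proof. by rewrite wD => /eqP->; rewrite add0r. Qed.

Lemma weight_lt0Dr k m k' m' :
  w k m < 0 -> w k' m' == 0 -> w (k + k')%N (m + m')%N < 0.
Proof. by rewrite wD => ? /eqP->; rewrite addr0. Qed.

Variable gs : seq ((nat * nat) * J).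
Hypothesis gs_homog : forall p, p \in gs -> G p.1.1 p.1.2 p.2 /\ w p.1.1 p.1.2 <= 0.

Definition weight0_gens := [seq p.2 | p <- gs & w p.1.1 p.1.2 == 0].

Lemma gen_alg_weight0_split x :
  gen_alg (G 0%N 0%N) [seq p.2 | p <- gs] x ->
  exists y z, [/\ x = y + z, gen_alg (G 0%N 0%N) weight0_gens y,
    hsum G (fun k m => w k m == 0) y & hsum G (fun k m => w k m < 0) z].
Proof.
have w00 : w 0%N 0%N == 0 by rewrite weight00.
elim=> {x} [x Gx | _ /mapP[p pH ->] | x1 x2 _ [y1 [z1 [-> Ay1 Py1 Qz1]]]
  _ [y2 [z2 [-> Ay2 Py2 Qz2]]] | x _ [y [z [-> Ay Py Qz]]]
  | x1 x2 _ [y1 [z1 [-> Ay1 Py1 Qz1]]] _ [y2 [z2 [-> Ay2 Py2 Qz2]]]].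
- exists x, 0; rewrite addr0; split=> //; first exact: ga_base.
    exact: hsum_homog Gx w00.
  exact: hsum0.
- have [Gp wp_le0] := gs_homog pH.
  have [wp0 | wp_neq0] := eqVneq (w p.1.1 p.1.2) 0.
    exists p.2, 0; rewrite addr0; split=> //; last exact: hsum0.
      by apply/ga_gen/map_f; rewrite mem_filter wp0 eqxx.
    by apply: hsum_homog Gp _; rewrite wp0.
  exists 0, p.2; rewrite add0r; split=> //; first exact/ga_base/(bigr_zero HG).
    exact: hsum0.
  by apply: hsum_homog Gp _; rewrite lt_neqAle wp_neq0.
- exists (y1 + y2), (z1 + z2); rewrite addrACA; split=> //.
  + exact: ga_add.
  + exact: hsumD.
  + exact: hsumD.
- exists (- y), (- z); rewrite opprD; split=> //.
  + exact: ga_opp.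
  + exact: hsumN.
  + exact: hsumN.
- exists (y1 * y2), (y1 * z2 + z1 * y2 + z1 * z2).
  rewrite mulrDl !mulrDr !addrA; split=> //.
  + exact: ga_mul.
  + exact: hsumM weight_eq0D _ _.
  + apply: hsumD; first apply: hsumD.
    * exact: hsumM weight_lt0Dl _ _.
    * exact: hsumM weight_lt0Dr _ _.
    * exact: hsumM weight_lt0D _ _.
Qed.

Lemma gen_alg_weight0 x :
  hsum G (fun k m => w k m == 0) x ->
  gen_alg (G 0%N 0%N) [seq p.2 | p <- gs] x <->
  gen_alg (G 0%N 0%N) weight0_gens x.
Proof.
move=> Px; split.
  case/gen_alg_weight0_split=> y [z [exyz Ay Py Qz]].
  suff z0 : z = 0 by rewrite exyz z0 addr0.
  apply: (hsum_disjoint_eq0 HG (P := fun k m => w k m == 0)); last exact: Qz.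
    by move=> k m /eqP->; rewrite ltxx.
  by rewrite -[z](addKr y) -exyz addrC; apply: hsumB.
apply: gen_alg_trans => g /mapP[p]; rewrite mem_filter => /andP[_ pH] ->.
by apply: ga_gen; rewrite map_f.
Qed.

Lemma weight0_gen_alg_hsum x :
  gen_alg (G 0%N 0%N) weight0_gens x -> hsum G (fun k m => w k m == 0) x.
Proof.
have w00 : w 0%N 0%N == 0 by rewrite weight00.
elim=> {x} [x Gx | g /mapP[p] | x y _ ? _ ? | x _ ? | x y _ ? _ ?].
- exact: hsum_homog Gx w00.
- by rewrite mem_filter => /andP[wp0 /gs_homog[Gp _]] ->; apply: hsum_homog Gp wp0.
- exact: hsumD.
- exact: hsumN.
- exact: hsumM weight_eq0D _ _.
Qed.

End WeightZeroPart.

Definition slope_weight (n : rat) (k m : nat) : rat := m%:R - k%:R * n.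

Lemma slope_weightD n k m k' m' :
  slope_weight n (k + k') (m + m') = slope_weight n k m + slope_weight n k' m'.
Proof. by rewrite /slope_weight !natrD mulrDl opprD addrACA. Qed.

Lemma J_eq_hsum (J : comPzRingType) (G : nat -> nat -> J -> Prop) n x :
  bigrading G -> J_eq G n x <-> hsum G (fun k m => slope_weight n k m == 0) x.
Proof.
move=> HG; split=> [/(homog_sumE HG _ _) | Px].
  by apply: hsum_mono => k m; rewrite subr_eq0.
by apply/(homog_sumE HG _ _); apply: hsum_mono Px => k m; rewrite subr_eq0.
Qed.

Lemma J_le_hsum (J : comPzRingType) (G : nat -> nat -> J -> Prop) n x :
  bigrading G -> J_le G n x <-> hsum G (fun k m => slope_weight n k m <= 0) x.
Proof.
move=> HG; split=> [/(homog_sumE HG _ _) | Px].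
  by apply: hsum_mono => k m; rewrite subr_le0.
by apply/(homog_sumE HG _ _); apply: hsum_mono Px => k m; rewrite subr_le0.
Qed.

Unset Implicit Arguments.

Theorem proposition6p10 (J : comPzRingType) (G : nat -> nat -> J -> Prop)
    (n : rat) :
  bigrading G -> 0 < n ->
  fin_gen_over (G 0%N 0%N) (J_le G n) ->
  fin_gen_over (G 0%N 0%N) (J_eq G n).
Proof.
move=> HG _ [gens [gens_le le_gens]].
have wD := slope_weightD n.
have [H [Hhom H_gens]] :=
  homogeneous_generators HG (fun g gg => (J_le_hsum _ _ HG).1 (gens_le g gg)).
exists (weight0_gens (slope_weight n) H); split.
  by move=> g gH; apply/(J_eq_hsum _ _ HG)/(weight0_gen_alg_hsum HG wD Hhom)/ga_gen.
move=> x; split=> [xn | /(weight0_gen_alg_hsum HG wD Hhom) /(J_eq_hsum _ _ HG) //].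
have Px := (J_eq_hsum _ _ HG).1 xn.
apply/(gen_alg_weight0 HG wD Hhom Px)/(gen_alg_trans H_gens)/le_gens/(J_le_hsum _ _ HG).
by apply: hsum_mono Px => k m /eqP->.
Qed.
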